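(* Let $\zeta_n=e^{2\pi i/n}$, $F_n={\mathbf Q}(\zeta_n+\zeta_n^{-1})$ and $\underline{\mathcal O}_n={\mathbf Z}[\zeta_n+\zeta_n^{-1}]$; let $\mathfrak p_n$ be the unique prime of $\underline{\mathcal O}_n$ above $2$. (a) If $n=2^s\ge 8$, put $p_n=2+\zeta_n+\zeta_n^{-1}$. Then $\operatorname{N}_{F_n/{\mathbf Q}}(p_n)=2$ and $p_n$ is a totally positive generator of $\mathfrak p_n$. (b) If $n=3\cdot 2^s\ge 12$, put $p_n'=1+\zeta_n+\zeta_n^{-1}$. Then $\operatorname{N}_{F_n/{\mathbf Q}}(p_n')=\operatorname{N}_{F_n/{\mathbf Q}}(p_n'-2)=-2$ and $\mathfrak p_n=(p_n')$. All units of $\underline{\mathcal O}_n$ have norm $1$, and there is no element of $\underline{\mathcal O}_n$ of norm $2$. *)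

From mathcomp Require Import all_boot all_order all_algebra.
From mathcomp Require Import algC.
Set Implicit Arguments. Unset Strict Implicit. Unset Printing Implicit Defensive.
Import Order.TTheory GRing.Theory Num.Theory.
Local Open Scope ring_scope.

(* zeta_n = e^{2 pi i/n} for even n: (n/2).-root (-1) is the (n/2)-th root of
   -1 of minimal argument, i.e. e^{i pi/(n/2)} = e^{2 pi i/n}.  All n in the
   statement are even. *)
Definition zeta (n : nat) : algC := (n./2).-root (-1).

Definition cc (n k : nat) : algC := zeta n ^+ k + (zeta n ^+ k)^-1.

Definition evk (n k : nat) (q : {poly int}) : algC := (map_poly intr q).[cc n k].

Definition inO (n : nat) (x : algC) : Prop := exists q : {poly int}, x = evk n 1 q.

(* The embeddings of F_n = Q(zeta_n + zeta_n^{-1}) into C are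
   zeta_n + zeta_n^{-1} |-> zeta_n^k + zeta_n^{-k}, k in (Z/n)^* / {+-1};
   we index them by 0 <= k < n/2 with gcd(k,n) = 1. *)
Definition emb_idx (n : nat) (k : 'I_n) : bool := coprime k n && (2 * k < n)%N.
Arguments emb_idx : clear implicits.

Definition normO (n : nat) (q : {poly int}) : algC :=
  \prod_(k < n | emb_idx n k) evk n k q.

Definition totally_positive (n : nat) (q : {poly int}) : Prop :=
  forall k : 'I_n, emb_idx n k -> 0 < evk n k q.

Definition idealO (n : nat) (P : algC -> Prop) : Prop :=
  [/\ (forall x, P x -> inO n x),
      P 0,
      (forall x y, P x -> P y -> P (x - y)) &
      (forall a x, inO n a -> P x -> P (a * x))].

Definition prime_idealO (n : nat) (P : algC -> Prop) : Prop :=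
  [/\ idealO n P,
      ~ P 1 &
      (forall x y, inO n x -> inO n y -> P (x * y) -> P x \/ P y)].

Definition principalO (n : nat) (p : algC) : algC -> Prop :=
  fun x => exists2 y, inO n y & x = p * y.

Definition generates_prime_above_2 (n : nat) (p : algC) : Prop :=
  [/\ prime_idealO n (principalO n p),
      principalO n p 2 &
      forall P, prime_idealO n P -> P 2 -> forall x, P x <-> principalO n p x].

Definition unitO (n : nat) (q : {poly int}) : Prop :=
  exists q' : {poly int}, evk n 1 q * evk n 1 q' = 1.

(* Put x = zeta_n + zeta_n^-1; the embeddings of F_n send x to zeta_n^k + zeta_n^-k,
   k < n/2 prime to n. When 4 | n the embeddings k and n/2 - k send x to opposite
   numbers, and (zeta^k + zeta^-k)^2 - 2 = zeta^2k + zeta^-2k, so if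
   F(x) F(-x) = G(x^2 - 2) then the norm of F(x) from F_n is the norm of G(x) from
   F_(n/2). As 2 and -1 are the fixed points of x^2 - 2, the functions 2 - x and -1 - x
   are stable under this halving, and the norms of x + 2, x + 1 and x - 1 descend to
   F_4 and F_6, where they are 2, -2 and -2. For n = 3 * 2^s the same descent applied
   to any integer polynomial writes every norm as a^2 - 3b^2, which is never 2 or -1
   modulo 3; by multiplicativity of the norm this settles units and elements of norm 2.
   For p = x + a dividing 2 in O_n = Z[x] we have O_n = Z + p O_n, so O_n/(p) is F_2
   unless (p) = O_n. Modulo 2, p^(2^j) is congruent to zeta^(2^j) + zeta^(-2^j) + a^(2^j),
   which is even for 2^j = n/2 and a = 2 (resp. 2^j = n/3 and a = 1). So p^N lies in
   2 O_n: this keeps (p) proper, since 1/2 is not an algebraic integer, and puts p in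
   every prime ideal above 2. *)

From HB Require Import structures.
From mathcomp Require Import all_boot all_order all_algebra.
From mathcomp Require Import algC algnum cyclotomic zify ring.
Set Implicit Arguments. Unset Strict Implicit. Unset Printing Implicit Defensive.
Import Order.TTheory GRing.Theory Num.Theory.
Local Open Scope ring_scope.

Definition ev (x : algC) (q : {poly int}) : algC := (map_poly intr q).[x].

Fact ev_is_zmod_morphism x : zmod_morphism (ev x).
Proof. by move=> p q; rewrite /ev rmorphB hornerD hornerN. Qed.

Fact ev_is_monoid_morphism x : monoid_morphism (ev x).
Proof. by split=> [|p q]; rewrite /ev ?rmorph1 ?hornerC // rmorphM hornerM. Qed.

HB.instance Definition _ x :=
  GRing.isZmodMorphism.Build _ _ (ev x) (ev_is_zmod_morphism x).
HB.instance Definition _ x :=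
  GRing.isMonoidMorphism.Build _ _ (ev x) (ev_is_monoid_morphism x).

Lemma evX x : ev x 'X = x.
Proof. by rewrite /ev map_polyX hornerX. Qed.

Lemma evC x (m : int) : ev x m%:P = m%:~R.
Proof. by rewrite /ev map_polyC hornerC. Qed.

Lemma ev_comp x p q : ev x (p \Po q) = ev (ev x q) p.
Proof. by rewrite /ev map_comp_poly horner_comp. Qed.

Lemma ev_intr (m : int) q : ev m%:~R q = q.[m]%:~R.
Proof. by rewrite /ev horner_map. Qed.

Lemma ev_rmorph (f : {rmorphism algC -> algC}) x q : f (ev x q) = ev (f x) q.
Proof.
rewrite /ev -horner_map /= -map_poly_comp; congr (_.[_]).
by apply: eq_map_poly => i /=; rewrite rmorph_int.
Qed.

Lemma ev_even_odd x q :
  ev x q = ev (x ^+ 2) (even_poly q) + ev (x ^+ 2) (odd_poly q) * x.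
Proof. by rewrite -{1}(poly_even_odd q) rmorphD rmorphM /= !ev_comp rmorphXn /= !evX. Qed.

Definition pair_poly (q : {poly int}) : {poly int} :=
  (even_poly q ^+ 2 - 'X * odd_poly q ^+ 2) \Po ('X + 2%:P).

Lemma pair_polyE x q : ev x q * ev (- x) q = ev (x ^+ 2 - 2) (pair_poly q).
Proof.
rewrite /pair_poly ev_comp.
have -> : ev (x ^+ 2 - 2) ('X + 2%:P) = x ^+ 2 by rewrite rmorphD /= evX evC subrK.
rewrite rmorphB /= rmorphXn [ev _ (_ * _)]rmorphM /= evX rmorphXn.
by rewrite (ev_even_odd x) (ev_even_odd (- x)) sqrrN; ring.
Qed.

Lemma pair_poly_at1 q :
  ev 1 (pair_poly q) = ((even_poly q).[3] ^+ 2 - 3 * (odd_poly q).[3] ^+ 2)%:~R.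
Proof.
rewrite /pair_poly ev_comp.
have -> : ev 1 ('X + 2%:P) = (3 : int)%:~R by rewrite rmorphD /= evX evC.
rewrite ev_intr; congr intr.
by rewrite !hornerE.
Qed.

(** * Norms by pairing conjugates *)

Lemma oneC_neqN1 : (1 : algC) != -1.
Proof. by rewrite -subr_eq0 opprK -(natrD _ 1 1) pnatr_eq0. Qed.

Lemma expN1_neq0 (z : algC) m : z ^+ m = -1 -> z != 0.
Proof.
apply: contra_eq_neq => ->; rewrite expr0n; case: (m == 0)%N => /=.
  exact: oneC_neqN1.
by rewrite eq_sym oppr_eq0 oner_eq0.
Qed.

Definition sympow (z : algC) (k : nat) : algC := z ^+ k + (z ^+ k)^-1.

Lemma sympow_sqr z k : z != 0 -> sympow z k ^+ 2 - 2 = sympow (z ^+ 2) k.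
Proof.
move=> z0; have zk0 : z ^+ k != 0 by rewrite expf_neq0.
by rewrite /sympow -exprM mulnC exprM; field.
Qed.

Lemma sympow_rec z k : z != 0 ->
  sympow z k.+2 = sympow z 1 * sympow z k.+1 - sympow z k.
Proof.
move=> z0; have zk0 : z ^+ k != 0 by rewrite expf_neq0.
by rewrite /sympow !exprS; field; rewrite zk0 z0.
Qed.

Lemma sympow_reflect z m k : z ^+ m = -1 -> (k <= m)%N ->
  sympow z (m - k) = - sympow z k.
Proof.
move=> zm km; have zk0 : z ^+ k != 0 by rewrite expf_neq0 // (expN1_neq0 zm).
have e : z ^+ (m - k) = - (z ^+ k)^-1.
  by apply: (mulIf zk0); rewrite -exprD subnK // zm mulNr mulVf.
by rewrite /sympow e invrN invrK opprD addrC.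
Qed.

Lemma sympow1_sqrtN1 z : z ^+ 2 = -1 -> sympow z 1 = 0.
Proof.
move=> z2; have z0 := expN1_neq0 z2.
by apply: (mulfI z0); rewrite /sympow expr1 mulrDr mulfV // -expr2 z2 mulr0 addNr.
Qed.

Lemma sympow1_cbrtN1 z : z ^+ 3 = -1 -> z != -1 -> sympow z 1 = 1.
Proof.
move=> z3 zN1; have z0 := expN1_neq0 z3.
have : (z + 1) * (z ^+ 2 - z + 1) = 0 by rewrite -[0](subrr (-1)) -{1}z3; ring.
move/eqP; rewrite mulf_eq0 addr_eq0 (negbTE zN1) /= => /eqP z2.
apply: (mulfI z0); rewrite /sympow expr1 mulrDr mulfV // mulr1 -expr2.
by apply/eqP; rewrite -subr_eq0 -z2; apply/eqP; ring.
Qed.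

Definition embprod (z : algC) (n : nat) (F : algC -> algC) : algC :=
  \prod_(k < n | emb_idx n k) F (sympow z k).

Lemma embprod_half z m F :
  embprod z m.*2 F = \prod_(0 <= k < m | coprime k m.*2) F (sympow z k).
Proof.
rewrite /embprod /emb_idx.
rewrite -(big_mkord (fun k => coprime k m.*2 && (2 * k < m.*2)%N) (fun k => F (sympow z k))).
rewrite (@big_cat_nat _ _ _ m) //=; last by rewrite -addnn leq_addr.
rewrite [X in _ * X]big1_seq ?mulr1 => [|k /andP[/andP[_]]]; last first.
  by rewrite mul2n ltn_double mem_index_iota => /[swap] /andP[/leq_gtF ->].
rewrite big_nat_cond [RHS]big_nat_cond; apply: eq_bigl => k.
by rewrite mul2n ltn_double; case: (k < m)%N; rewrite ?andbF ?andbT.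
Qed.

Lemma prod_nat_pair (R : comRingType) (g : nat -> R) t :
  \prod_(0 <= k < t.*2.+1) g k = g t * \prod_(0 <= k < t) (g k * g (t.*2 - k)%N).
Proof.
have tt : (t <= t.*2)%N by rewrite -addnn leq_addr.
rewrite (@big_cat_nat _ _ _ t) //= ?leqW // [\prod_(t <= i < _) _]big_ltn ?ltnS //.
rewrite [X in _ = _ * X]big_split /= mulrCA.
congr (_ * (_ * _)); rewrite -[t.+1]add0n big_addn big_nat_rev /=.
have -> : (t.*2.+1 - t.+1 = t)%N by rewrite subSS -addnn addnK.
by apply: eq_big_nat => k /andP[_ kt]; congr g; rewrite -addnn; lia.
Qed.

Lemma coprime_double k m : coprime k m.*2.*2 = coprime k m.*2.
Proof. by rewrite -!mul2n !coprimeMr andbA andbb. Qed.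

Lemma coprime_subr k m : (k <= m)%N -> coprime (m - k) m = coprime k m.
Proof.
move=> km; rewrite -{2 3}(subnK km) /coprime gcdnDl.
by rewrite gcdnDr gcdnC.
Qed.

Lemma embprod_pair z t F G : (1 < t)%N -> z ^+ t.*2 = -1 ->
    (forall x, F x * F (- x) = G (x ^+ 2 - 2)) ->
  embprod z t.*2.*2 F = embprod (z ^+ 2) t.*2 G.
Proof.
move=> t_gt1 zt FG; have z0 := expN1_neq0 zt.
have not_coprime_t : ~~ coprime t t.*2.*2.
  by rewrite coprime_double /coprime -addnn gcdnDl gcdnn neq_ltn t_gt1 orbT.
rewrite !embprod_half big_mkcond [RHS]big_mkcond /=.
transitivity (\prod_(0 <= k < t.*2.+1)
                (if coprime k t.*2.*2 then F (sympow z k) else 1)).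
  rewrite big_nat_recr //= coprime_double /coprime gcdnn.
  by rewrite ifN ?mulr1 //; lia.
rewrite prod_nat_pair ifN // mul1r; apply: eq_big_nat => k /andP[_ kt].
have kt2 : (k <= t.*2)%N by rewrite -addnn ltnW ?ltn_addr.
rewrite sympow_reflect // !coprime_double coprime_subr //.
by case: ifP => _; rewrite ?mulr1 // FG sympow_sqr.
Qed.

Lemma embprod_iter z j m (Fs : nat -> algC -> algC) :
    (1 < m)%N -> z ^+ (2 ^ j * m) = -1 ->
    (forall i x, Fs i x * Fs i (- x) = Fs i.+1 (x ^+ 2 - 2)) ->
  embprod z (2 ^ j * m).*2 (Fs 0%N) = embprod (z ^+ (2 ^ j)) m.*2 (Fs j).
Proof.
elim: j z Fs => [|j IH] z Fs m_gt1 zN FsE; first by rewrite expn0 mul1n expr1.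
have zN' : z ^+ (2 ^ j * m).*2 = -1 by rewrite -mul2n mulnA -expnS.
rewrite expnS -mulnA mul2n (embprod_pair (G := Fs 1%N)) //; last first.
  exact: leq_trans m_gt1 (leq_pmull _ (expn_gt0 2 j)).
by rewrite (IH _ (fun i => Fs i.+1)) -?exprM -?expnS ?mul2n.
Qed.

Lemma embprod4 z F : embprod z 4 F = F (sympow z 1).
Proof. by rewrite /embprod big_mkcond !big_ord_recr big_ord0 /= !mul1r !mulr1. Qed.

Lemma embprod6 z F : embprod z 6 F = F (sympow z 1).
Proof. by rewrite /embprod big_mkcond !big_ord_recr big_ord0 /= !mul1r !mulr1. Qed.

Lemma embprod_pow2 j z (Fs : nat -> algC -> algC) : z ^+ (2 ^ j.+1) = -1 ->
    (forall i x, Fs i x * Fs i (- x) = Fs i.+1 (x ^+ 2 - 2)) ->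
  embprod z (2 ^ j.+2) (Fs 0%N) = Fs j 0.
Proof.
move=> zN FsE; have -> : (2 ^ j.+2 = (2 ^ j * 2).*2)%N by rewrite !expnS; lia.
by rewrite embprod_iter ?embprod4 ?sympow1_sqrtN1 //; rewrite -?exprM -expnSr.
Qed.

Lemma embprod_3pow2 j z (Fs : nat -> algC -> algC) :
    z ^+ (3 * 2 ^ j) = -1 -> z ^+ (2 ^ j) != -1 ->
    (forall i x, Fs i x * Fs i (- x) = Fs i.+1 (x ^+ 2 - 2)) ->
  embprod z (3 * 2 ^ j.+1) (Fs 0%N) = Fs j 1.
Proof.
move=> zN zN1 FsE; have -> : (3 * 2 ^ j.+1 = (2 ^ j * 3).*2)%N by rewrite !expnS; lia.
by rewrite embprod_iter ?embprod6 ?sympow1_cbrtN1 //; rewrite -?exprM mulnC.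
Qed.

(** * Roots of unity and the primitivity of zeta_n *)

Lemma mul_conj_unity_root n (v : algC) : (0 < n)%N -> v ^+ n = 1 -> v * v^* = 1.
Proof.
move=> n_gt0 vn; have : `|v| ^+ n = 1 by rewrite -normrX vn normr1.
by move/eqP; rewrite pexpr_eq1 // => /eqP v1; rewrite -normCK v1 expr1n.
Qed.

Lemma unity_root_add_inv_add2 N (v : algC) : (0 < N)%N -> v ^+ N = 1 ->
  v + v^-1 + 2 = (1 + v) * (1 + v)^*.
Proof.
move=> N_gt0 vN; have vv := mul_conj_unity_root N_gt0 vN.
have -> : v^-1 = v^* by rewrite -[v^-1]mulr1 -vv mulKf // -normr_eq0 -sqrf_eq0 normCK vv oner_eq0.
by rewrite rmorphD /= rmorph1 mulrDl !mulrDr vv; ring.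
Qed.

Lemma rootC_Re_max_real n (x v : algC) : (0 < n)%N -> x \is Num.real ->
  v ^+ n = x -> 'Re v <= 'Re (n.-root x).
Proof.
move=> n_gt0 xR vn; have [Iv_ge0|Iv_lt0] := real_ge0P (Creal_Im v).
  exact: rootC_Re_max.
rewrite -Re_conj; apply: rootC_Re_max => //.
  by rewrite -rmorphXn /= vn (CrealP xR).
by rewrite Im_conj oppr_ge0 ltW.
Qed.

Lemma trace_le0_of_le_cube (u : algC) : u * u^* = 1 -> u != 1 ->
  u + u^* <= u ^+ 3 + (u ^+ 3)^* -> u + u^* <= 0.
Proof.
move=> uu u1; set a := u + u^*.
have aR : a \is Num.real by rewrite CrealE /a rmorphD /= conjCK addrC.
have -> : u ^+ 3 + (u ^+ 3)^* = a ^+ 3 - 3 * (u * u^*) * a.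
  by rewrite rmorphXn /= /a; ring.
have a_geN2 : 0 <= a + 2.
  have -> : a + 2 = (u + 1) * (u + 1)^* by rewrite rmorphD /= rmorph1 mulrDr !mulrDl uu /a; ring.
  exact: mul_conjC_ge0.
have a_lt2 : 0 < 2 - a.
  have -> : 2 - a = (u - 1) * (u - 1)^* by rewrite rmorphB /= rmorph1 mulrBr !mulrBl uu /a; ring.
  by rewrite mul_conjC_gt0 subr_eq0.
rewrite uu mulr1 -subr_ge0 => h; rewrite real_leNgt ?real0 //; apply/negP => a_gt0.
move: h; have -> : a ^+ 3 - 3 * a - a = - (a * (2 - a) * (a + 2)) by ring.
by rewrite oppr_ge0 lt_geF // !mulr_gt0 // addr_gt0.
Qed.

Lemma prim_root3_sum (R : idomainType) (om : R) :
  3.-primitive_root om -> 1 + om + om ^+ 2 = 0.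
Proof.
move=> om_prim; have om1 : om - 1 != 0.
  by rewrite subr_eq0 -[om]expr1 -(prim_order_dvd om_prim).
apply: (mulfI om1); rewrite mulr0.
by transitivity (om ^+ 3 - 1); [ring | rewrite (prim_expr_order om_prim) subrr].
Qed.

Lemma rotated_traces_not_all_le0 (y om : algC) : 3.-primitive_root om ->
    (forall j, y * om ^+ j * (y * om ^+ j)^* = 1) ->
    (forall j, y * om ^+ j + (y * om ^+ j)^* <= 0) -> False.
Proof.
move=> om_prim uu u_le0; pose u j := y * om ^+ j.
have om_sum := prim_root3_sum om_prim.
have tr_sum : (u 0 + (u 0)^*) + (u 1 + (u 1)^*) + (u 2 + (u 2)^*) = 0.
  have u_sum : u 0 + u 1 + u 2 = 0 by rewrite /u -!mulrDr om_sum mulr0.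
  transitivity (u 0 + u 1 + u 2 + (u 0 + u 1 + u 2)^*); first by rewrite !rmorphD /=; ring.
  by rewrite u_sum rmorph0 addr0.
have : - (u 0 + (u 0)^*) + - (u 1 + (u 1)^*) + - (u 2 + (u 2)^*) == 0.
  by rewrite -!opprD tr_sum oppr0.
rewrite !paddr_eq0 ?addr_ge0 ?oppr_ge0 ?u_le0 // !oppr_eq0.
move=> /andP[/andP[/eqP t0 /eqP t1] /eqP t2].
have u_sqr (v : algC) : v * v^* = 1 -> v + v^* = 0 -> v ^+ 2 = -1.
  by move=> vv /eqP; rewrite addrC addr_eq0 => /eqP vc; rewrite -vv vc mulrN opprK.
have : u 0 ^+ 2 + u 1 ^+ 2 + u 2 ^+ 2 = 0.
  transitivity (y ^+ 2 * (1 + om + om ^+ 2) + y ^+ 2 * om * (om ^+ 3 - 1)).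
    by rewrite /u; ring.
  by rewrite om_sum (prim_expr_order om_prim) subrr !mulr0 addr0.
rewrite (u_sqr _ (uu 0%N) t0) (u_sqr _ (uu 1%N) t1) (u_sqr _ (uu 2%N) t2).
move=> /eqP; apply/negP.
have -> : -1 + -1 + -1 = - 3%:R :> algC by ring.
by rewrite oppr_eq0 pnatr_eq0.
Qed.

(* The only information on N.-root (-1) is the maximality of its real part
   (rootC_Re_max). If w^M = -1, the cube roots u of w are N-th roots of -1 too, so
   this maximality bounds the trace of u by that of u^3 = w. *)
Lemma rootC_3mul_pow_neqN1 M : (0 < M)%N -> (3 * M).-root (-1 : algC) ^+ M != -1.
Proof.
move=> M_gt0; set N := (3 * M)%N; set w := N.-root (-1 : algC).
have N_gt0 : (0 < N)%N by rewrite muln_gt0.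
apply/eqP => wM.
have w1 : w != 1 by apply: contra_eq_neq wM => ->; rewrite expr1n oneC_neqN1.
have [om om_prim] := C_prim_root_exists (isT : (0 < 3)%N).
set y := 3.-root w; pose u j := y * om ^+ j.
have u3 j : u j ^+ 3 = w.
  by rewrite exprMn rootCK // -exprM mulnC exprM (prim_expr_order om_prim) expr1n mulr1.
have uN j : u j ^+ N = -1 by rewrite exprM u3 wM.
have uu j : u j * (u j)^* = 1.
  apply: (@mul_conj_unity_root (N + N)); first by rewrite addn_gt0 N_gt0.
  by rewrite exprD uN mulrNN mulr1.
apply: (rotated_traces_not_all_le0 om_prim uu) => j.
apply: trace_le0_of_le_cube (uu j) _ _.
  by apply: contra_neq w1 => u1; rewrite -(u3 j) u1 expr1n.
have := rootC_Re_max_real N_gt0 (rpredN1 _) (uN j).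
by rewrite u3 !ReE ler_pM2r ?invr_gt0 ?ltr0n.
Qed.

Lemma zeta_half m : (0 < m)%N -> zeta m.*2 ^+ m = -1.
Proof. by move=> m_gt0; rewrite /zeta doubleK rootCK. Qed.

Lemma zeta_unity n : zeta n.*2 ^+ n.*2 = 1.
Proof.
have [->|n_gt0] := posnP n; first by rewrite expr0.
by rewrite -[in X in _ ^+ X]addnn exprD zeta_half // mulrNN mulr1.
Qed.

Lemma zeta_pow2_half j : zeta (2 ^ j.+1) ^+ (2 ^ j) = -1.
Proof. by rewrite expnS mul2n zeta_half ?expn_gt0. Qed.

Lemma zeta_3pow2_half j : zeta (3 * 2 ^ j.+1) ^+ (3 * 2 ^ j) = -1.
Proof. by rewrite expnS mulnCA mul2n zeta_half ?muln_gt0 ?expn_gt0. Qed.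

Lemma zeta_3pow2_neqN1 j : zeta (3 * 2 ^ j.+1) ^+ (2 ^ j) != -1.
Proof.
rewrite /zeta expnS mulnCA mul2n doubleK.
by apply: rootC_3mul_pow_neqN1; rewrite expn_gt0.
Qed.

Lemma cc1_Aint n : (0 < n)%N -> cc n.*2 1 \in Aint.
Proof.
move=> n_gt0; have n2_gt0 : (0 < n.*2)%N by rewrite double_gt0.
rewrite /cc expr1 rpredD //; apply: (Aint_unity_root n2_gt0).
  by rewrite unity_rootE zeta_unity.
by rewrite unity_rootE exprVn zeta_unity invr1.
Qed.

(** * Norms from F_(2^s) and F_(3 2^s) *)

Lemma normO_embprod n q : normO n q = embprod (zeta n) n (ev^~ q).
Proof. by []. Qed.

Lemma normO_pow2_pair j q (G : algC -> algC) :
    (forall x, ev x q * ev (- x) q = G (x ^+ 2 - 2)) ->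
    (forall x, G x * G (- x) = G (x ^+ 2 - 2)) ->
  normO (2 ^ j.+3) q = G 0.
Proof.
move=> qG GG; rewrite normO_embprod.
rewrite (embprod_pow2 (j := j.+1) (Fs := fun i => if i is 0 then ev^~ q else G)) //.
  exact: zeta_pow2_half.
by case.
Qed.

Lemma normO_3pow2_pair j q (G : algC -> algC) :
    (forall x, ev x q * ev (- x) q = G (x ^+ 2 - 2)) ->
    (forall x, G x * G (- x) = G (x ^+ 2 - 2)) ->
  normO (3 * 2 ^ j.+2) q = G 1.
Proof.
move=> qG GG; rewrite normO_embprod.
rewrite (embprod_3pow2 (j := j.+1) (Fs := fun i => if i is 0 then ev^~ q else G)) //.
- exact: zeta_3pow2_half.
- exact: zeta_3pow2_neqN1.
by case.
Qed.

Lemma normO_3pow2 j q : exists a b : int, normO (3 * 2 ^ j.+2) q = (a ^+ 2 - 3 * b ^+ 2)%:~R.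
Proof.
rewrite normO_embprod (embprod_3pow2 (j := j.+1) (Fs := fun i => ev^~ (iter i pair_poly q))).
- by rewrite /= pair_poly_at1; do 2!eexists.
- exact: zeta_3pow2_half.
- exact: zeta_3pow2_neqN1.
by move=> i x; rewrite pair_polyE.
Qed.

Lemma sqr_sub3sqr_neq (a b c : int) : (c %% 3)%Z = 2 -> a ^+ 2 - 3 * b ^+ 2 != c.
Proof.
move=> c3; rewrite (divz_eq a 3) (divz_eq c 3) c3 !expr2.
have := modz_ge0 a (isT : (3 : int) != 0); have := ltz_pmod a (isT : (0 < 3 :> int)).
set r := (a %% 3)%Z => r_lt3 r_ge0.
have [->|[->|->]] : r = 0 \/ r = 1 \/ r = 2 by lia.
all: by apply/eqP; lia.
Qed.

Lemma normO_mul_unit n q q' : zeta n ^+ n = 1 ->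
  evk n 1 q * evk n 1 q' = 1 -> normO n q * normO n q' = 1.
Proof.
move=> zn qq'; rewrite /normO -big_split /=; apply: big1 => k /andP[k_coprime _].
have [f fz] := Qn_aut_exists k_coprime.
have fcc : f (cc n 1) = cc n k by rewrite /cc rmorphD fmorphV /= expr1 fz.
by rewrite /evk -!/(ev _ _) -fcc -!ev_rmorph -rmorphM /= qq' rmorph1.
Qed.

Lemma evk_XaddC n k (a : int) : evk n k ('X + a%:P) = cc n k + a%:~R.
Proof. by rewrite /evk -/(ev _ _) rmorphD /= evX evC. Qed.

(** * The ring O_n and the prime above 2 *)

Section RingO.
Variable n : nat.

Lemma inO_ev q : inO n (ev (cc n 1) q).
Proof. by exists q. Qed.

Lemma inOB x y : inO n x -> inO n y -> inO n (x - y).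
Proof. by move=> [p ->] [q ->]; exists (p - q); rewrite /evk -!/(ev _ _) rmorphB. Qed.

Lemma inOM x y : inO n x -> inO n y -> inO n (x * y).
Proof. by move=> [p ->] [q ->]; exists (p * q); rewrite /evk -!/(ev _ _) rmorphM. Qed.

Lemma inO_int (m : int) : inO n m%:~R.
Proof. by exists m%:P; rewrite /evk -/(ev _ _) evC. Qed.

Lemma inOD x y : inO n x -> inO n y -> inO n (x + y).
Proof. by move=> [p ->] [q ->]; exists (p + q); rewrite /evk -!/(ev _ _) rmorphD. Qed.

Lemma inOX x k : inO n x -> inO n (x ^+ k).
Proof.
move=> Ox; elim: k => [|k IHk]; last by rewrite exprS; apply: inOM.
by rewrite expr0; apply: (inO_int 1).
Qed.

Lemma inO_cc1 : inO n (cc n 1).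
Proof. by exists 'X; rewrite /evk -/(ev _ _) evX. Qed.

Lemma inO_cc k : zeta n != 0 -> inO n (cc n k).
Proof.
move=> z0; suff : inO n (cc n k) /\ inO n (cc n k.+1) by case.
elim: k => [|k [Ok Ok1]].
  by split; [rewrite /cc expr0 invr1; apply: (inO_int 2) | apply: inO_cc1].
split=> //; change (inO n (sympow (zeta n) k.+2)); rewrite sympow_rec //.
by apply: inOB => //; apply: inOM => //; apply: inO_cc1.
Qed.

Lemma inO_evk k q : zeta n != 0 -> inO n (evk n k q).
Proof.
move=> z0; have [r er] := inO_cc k z0.
by exists (q \Po r); rewrite /evk -!/(ev _ _) ev_comp er.
Qed.

Lemma inO_Aint x : cc n 1 \in Aint -> inO n x -> x \in Aint.
Proof.
move=> cA [q ->]; apply: rpred_horner => //.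
by apply/polyOverP => i; rewrite coef_map Aint_int.
Qed.

Lemma principalOD d x y :
  principalO n d x -> principalO n d y -> principalO n d (x + y).
Proof. by move=> [u Ou ->] [v Ov ->]; exists (u + v); [apply: inOD | rewrite mulrDr]. Qed.

Lemma principalOMl d a x : inO n a -> principalO n d x -> principalO n d (a * x).
Proof. by move=> Oa [u Ou ->]; exists (a * u); [apply: inOM | rewrite mulrCA]. Qed.

Lemma principalON d x : principalO n d x -> principalO n d (- x).
Proof. by rewrite -mulN1r; apply: principalOMl (inO_int (-1)). Qed.

Lemma idealO_principal d : inO n d -> idealO n (principalO n d).
Proof.
move=> Od; split=> [x [u Ou ->]| | x y Px Py | a x Oa Px].
- exact: inOM.
- by exists 0; rewrite ?mulr0 //; apply: (inO_int 0).
- by apply: principalOD Px (principalON Py).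
- exact: principalOMl.
Qed.

Definition eqmodO d x y := principalO n d (x - y).

Lemma eqmodO_trans d x y w : eqmodO d x y -> eqmodO d y w -> eqmodO d x w.
Proof. by move=> Pxy Pyw; have := principalOD Pxy Pyw; rewrite addrA subrK. Qed.

Lemma eqmodO_sqr d x y : inO n x -> inO n y ->
  eqmodO d x y -> eqmodO d (x ^+ 2) (y ^+ 2).
Proof.
move=> Ox Oy Pxy; have := principalOMl (inOD Ox Oy) Pxy.
by rewrite mulrC -subr_sqr.
Qed.

Lemma eqmod2_sqrD x y : inO n x -> inO n y ->
  eqmodO 2 ((x + y) ^+ 2) (x ^+ 2 + y ^+ 2).
Proof. by move=> Ox Oy; exists (x * y); [apply: inOM | ring]. Qed.

Lemma eqmod2_frobenius x y j : inO n x -> inO n y ->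
  eqmodO 2 ((x + y) ^+ (2 ^ j)) (x ^+ (2 ^ j) + y ^+ (2 ^ j)).
Proof.
move=> Ox Oy; elim: j => [|j IHj]; first by exists 0; rewrite ?subrr ?mulr0 //; apply: (inO_int 0).
rewrite expnSr !exprM; apply: eqmodO_trans (eqmod2_sqrD _ _); try by apply: inOX.
by apply: (eqmodO_sqr _ _ IHj); [apply: inOX; apply: inOD | apply: inOD; apply: inOX].
Qed.

Lemma eqmodO_addr d x y w : eqmodO d x y -> eqmodO d (x + w) (y + w).
Proof. by rewrite /eqmodO opprD addrACA subrr addr0. Qed.

Lemma eqmodO_principal d x y : eqmodO d x y -> principalO n d y -> principalO n d x.
Proof. by move=> Pxy Py; have := principalOD Pxy Py; rewrite subrK. Qed.

Lemma eqmod2_cc_pow2 j : zeta n != 0 -> eqmodO 2 (cc n 1 ^+ (2 ^ j)) (cc n (2 ^ j)).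
Proof.
move=> z0; elim: j => [|j IHj]; first by exists 0; rewrite ?subrr ?mulr0 //; apply: (inO_int 0).
rewrite expnSr exprM.
apply: eqmodO_trans (eqmodO_sqr (inOX _ inO_cc1) (inO_cc _ z0) IHj) _.
have -> : cc n (2 ^ j * 2) = cc n (2 ^ j) ^+ 2 - 2.
  by rewrite [RHS](sympow_sqr _ z0) /sympow -!exprM mulnC.
by exists 1; [apply: (inO_int 1) | rewrite opprB addrC subrK mulr1].
Qed.

Lemma eqmod2_shift_pow2 (a : int) j : zeta n != 0 ->
  eqmodO 2 ((cc n 1 + a%:~R) ^+ (2 ^ j)) (cc n (2 ^ j) + a%:~R ^+ (2 ^ j)).
Proof.
move=> z0; apply: eqmodO_trans (eqmod2_frobenius _ inO_cc1 (inO_int a)) _.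
exact/eqmodO_addr/eqmod2_cc_pow2.
Qed.

Lemma principalO_normO q : (2 < n)%N -> zeta n != 0 ->
  principalO n (evk n 1 q) (normO n q).
Proof.
move=> n_gt2 z0; have n_gt1 := ltnW n_gt2.
have emb1 : emb_idx n (Ordinal n_gt1) by rewrite /emb_idx coprime1n.
rewrite /normO (bigD1 _ emb1) /=; eexists; last by [].
by apply: big_ind => [|x y|k _]; [apply: (inO_int 1) | apply: inOM | apply: inO_evk].
Qed.
End RingO.

Lemma int_eq_double_add_bool (m : int) : exists j (b : bool), m = j * 2 + b%:R.
Proof.
exists (m %/ 2)%Z, (m %% 2 == 1)%Z; rewrite {1}(divz_eq m 2); congr (_ + _).
have := modz_ge0 m (isT : (2 : int) != 0); have := ltz_pmod m (isT : (0 < 2 :> int)).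
by case: eqP => [-> //|]; lia.
Qed.

Lemma halfC_notin_Aint : (2%:R : algC)^-1 \notin Aint.
Proof.
apply/negP => halfA; have : (2%:R : algC)^-1 \is a Num.int.
  by apply: Cint_rat_Aint halfA; rewrite rpredV rpred_nat.
move/intrP => [m em].
have : ((2 * m)%:~R : algC) = (1 : int)%:~R.
  by rewrite intrM -em -[(2 : int)%:~R]/(2%:R : algC) mulfV // pnatr_eq0.
by move/eqP; rewrite eqr_int => /eqP; lia.
Qed.

Lemma prime_idealO_pow n P x k : prime_idealO n P -> inO n x -> P (x ^+ k) -> P x.
Proof.
move=> [_ P1 Pprime] Ox; elim: k => [|k IHk]; first by rewrite expr0.
by rewrite exprS => /Pprime[] //; apply: inOX.
Qed.

Section PrimeAboveTwo.
Variables (n : nat) (a : int) (N : nat).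
Let p := cc n 1 + a%:~R.
Hypothesis cc1_Aint : cc n 1 \in Aint.
Hypothesis p_dvd_2 : principalO n p 2.
Hypothesis two_dvd_pN : principalO n 2 (p ^+ N).

Lemma inO_shift : inO n p.
Proof. exact: inOD (inO_cc1 n) (inO_int n a). Qed.

Lemma inO_eqmod_int x : inO n x -> exists m : int, eqmodO n p x m%:~R.
Proof.
move=> [q ->]; exists q.[- a].
have : root (q - q.[- a]%:P) (- a) by rewrite /root hornerD hornerN hornerC subrr.
move/factor_theorem => [r er]; exists (ev (cc n 1) r); first exact: inO_ev.
rewrite /evk -/(ev _ _) -(evC (cc n 1)) -rmorphB /= er rmorphM /= rmorphB /= evX evC.
by rewrite rmorphN /= opprK mulrC.
Qed.

Lemma inO_eqmod_bool x : inO n x -> exists b : bool, eqmodO n p x b%:R.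
Proof.
move=> /inO_eqmod_int [m Pxm]; have [j [b em]] := int_eq_double_add_bool m.
exists b; apply: eqmodO_trans Pxm _.
rewrite /eqmodO; have -> : m%:~R - b%:R = j%:~R * 2 :> algC.
  by rewrite em rmorphD rmorphM /= !mulrz_nat addrK.
exact: principalOMl (inO_int n j) p_dvd_2.
Qed.

Lemma principalO_neq1 : ~ principalO n p 1.
Proof.
move=> [y Oy e1]; have [t Ot ept] := two_dvd_pN.
have two0 : (2%:R : algC) != 0 by rewrite pnatr_eq0.
have e : (2%:R : algC)^-1 = t * y ^+ N.
  by apply: (mulfI two0); rewrite mulfV // mulrA -ept -exprMn -e1 expr1n.
have := halfC_notin_Aint; rewrite e => /negP; apply.
by apply: inO_Aint cc1_Aint _; apply: inOM Ot (inOX _ Oy).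
Qed.

Lemma prime_idealO_principal : prime_idealO n (principalO n p).
Proof.
split; [exact: idealO_principal inO_shift | exact: principalO_neq1 |].
move=> x y Ox Oy Pxy.
have [[] Px] := inO_eqmod_bool Ox; last by left; move: Px; rewrite /eqmodO subr0.
have [[] Py] := inO_eqmod_bool Oy; last by right; move: Py; rewrite /eqmodO subr0.
have Pxy1 : eqmodO n p (x * y) 1.
  have := principalOD (principalOMl Ox Py) Px.
  by rewrite /eqmodO mulrBr mulr1 addrA subrK.
exfalso; apply: principalO_neq1.
by have := principalOD Pxy (principalON Pxy1); rewrite opprB addrC subrK.
Qed.

Lemma generates_prime_above_2_shift : generates_prime_above_2 n p.
Proof.
split=> [||P Pprime P2 x]; [exact: prime_idealO_principal | exact: p_dvd_2 |].
case: (Pprime) => -[P_O _ PB PM] P1 _.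
have Pp : P p.
  apply: (prime_idealO_pow (k := N) Pprime inO_shift); have [t Ot ->] := two_dvd_pN.
  by rewrite mulrC; apply: PM.
split=> [Px | [y Oy ->]]; last by rewrite mulrC; apply: PM.
have [[] Pxb] := inO_eqmod_bool (P_O _ Px); last by move: Pxb; rewrite /eqmodO subr0.
case: P1; have [y Oy exy] := Pxb.
by have := PB _ _ Px (PM _ _ Oy Pp); rewrite mulrC -exy opprB addrC subrK.
Qed.
End PrimeAboveTwo.

Lemma normO_pow2_X2 j : normO (2 ^ j.+3) ('X + 2%:P) = 2.
Proof.
rewrite (@normO_pow2_pair j _ (fun x => 2 - x)) ?subr0 // => x.
  by rewrite !rmorphD /= !evX !evC; ring.
by ring.
Qed.

Lemma totally_positive_pow2_X2 j : totally_positive (2 ^ j.+3) ('X + 2%:P).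
Proof.
set n := (2 ^ j.+3)%N => k k_emb.
have zn : zeta n ^+ n = 1 by rewrite /n expnS mul2n zeta_unity.
have zk : (zeta n ^+ k) ^+ n = 1 by rewrite exprAC zn expr1n.
have e := unity_root_add_inv_add2 (expn_gt0 2 j.+3) zk.
rewrite evk_XaddC [cc n k]/(_ + _) e mul_conjC_gt0.
apply: contra_eq_neq (normO_pow2_X2 j); rewrite /normO (bigD1 k k_emb) /= evk_XaddC.
by rewrite [cc n k]/(_ + _) e => ->; rewrite !mul0r eq_sym pnatr_eq0.
Qed.

Lemma generates_prime_above_2_pow2 j :
  generates_prime_above_2 (2 ^ j.+3) (evk (2 ^ j.+3) 1 ('X + 2%:P)).
Proof.
set n := (2 ^ j.+3)%N; set m := (2 ^ j.+2)%N.
have zm : zeta n ^+ m = -1 by apply: zeta_pow2_half.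
have z0 := expN1_neq0 zm.
rewrite evk_XaddC; apply: (@generates_prime_above_2_shift _ _ m).
- by rewrite /n expnS mul2n cc1_Aint ?expn_gt0.
- rewrite -evk_XaddC -(normO_pow2_X2 j); apply: principalO_normO z0.
  by rewrite /n !expnS; have := expn_gt0 2 j; lia.
apply: eqmodO_principal (eqmod2_shift_pow2 _ _ z0) _.
have -> : cc n m = -2 by rewrite /cc zm invrN invr1 -opprD.
exists (2 ^+ m.-1 - 1 : int)%:~R; first exact: inO_int.
have m_gt0 : (0 < m)%N by rewrite expn_gt0.
by rewrite rmorphB rmorphXn /= -[in 2 ^+ m](prednK m_gt0) exprS; ring.
Qed.

Lemma normO_3pow2_X1 j : normO (3 * 2 ^ j.+2) ('X + 1) = -2.
Proof.
rewrite (@normO_3pow2_pair j _ (fun x => -1 - x)) => [|x|x]; last by ring.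
- by ring.
by rewrite !rmorphD /= !evX !rmorph1; ring.
Qed.

Lemma normO_3pow2_X1_sub2 j : normO (3 * 2 ^ j.+2) ('X + 1 - 2%:P) = -2.
Proof.
rewrite (@normO_3pow2_pair j _ (fun x => -1 - x)) => [|x|x]; last by ring.
- by ring.
by rewrite !rmorphB /= !rmorphD /= !evX !rmorph1; ring.
Qed.

Lemma generates_prime_above_2_3pow2 j :
  generates_prime_above_2 (3 * 2 ^ j.+2) (evk (3 * 2 ^ j.+2) 1 ('X + 1)).
Proof.
set n := (3 * 2 ^ j.+2)%N.
have zm : zeta n ^+ (3 * 2 ^ j.+1) = -1 by apply: zeta_3pow2_half.
have z0 := expN1_neq0 zm.
have ep : evk n 1 ('X + 1) = cc n 1 + (1 : int)%:~R.
  by rewrite /evk -/(ev _ _) rmorphD /= evX rmorph1.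
rewrite ep; apply: (@generates_prime_above_2_shift _ _ (2 ^ j.+2)).
- by rewrite /n expnS mulnCA mul2n cc1_Aint ?muln_gt0 ?expn_gt0.
- rewrite -ep -[2]opprK -(normO_3pow2_X1 j); apply/principalON.
  apply: principalO_normO z0.
  by rewrite /n !expnS; have := expn_gt0 2 j; lia.
apply: eqmodO_principal (eqmod2_shift_pow2 _ _ z0) _.
set v := zeta n ^+ (2 ^ j.+1).
have v1 : sympow v 1 = 1.
  apply: sympow1_cbrtN1; [by rewrite /v -exprM mulnC | exact: (zeta_3pow2_neqN1 j.+1)].
have -> : cc n (2 ^ j.+2) = sympow v 1 ^+ 2 - 2.
  by rewrite sympow_sqr ?expf_neq0 // /sympow /v -!exprM muln1 -expnSr.
by exists 0; [apply: (inO_int n 0) | rewrite v1 mulr1z !expr1n mulr0; ring].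
Qed.

Lemma normO_3pow2_unit j q : unitO (3 * 2 ^ j.+2) q -> normO (3 * 2 ^ j.+2) q = 1.
Proof.
move=> [q' qq']; have [a [b eq]] := normO_3pow2 j q; have [a' [b' eq']] := normO_3pow2 j q'.
have zn : zeta (3 * 2 ^ j.+2) ^+ (3 * 2 ^ j.+2) = 1.
  by rewrite expnS mulnCA mul2n zeta_unity.
have /eqP := normO_mul_unit zn qq'; rewrite eq eq' -intrM -[1 : algC]/((1 : int)%:~R).
rewrite eqr_int mulrC => /eqP /intUnitRing.unitzPl; rewrite qualifE.
case/orP=> /eqP eA; first by rewrite eA.
by have := sqr_sub3sqr_neq a b (erefl : ((-1) %% 3)%Z = 2); rewrite eA eqxx.
Qed.

Lemma normO_3pow2_neq2 j q : normO (3 * 2 ^ j.+2) q <> 2.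
Proof.
have [a [b ->]] := normO_3pow2 j q; apply/eqP.
by rewrite -[2 : algC]/((2 : int)%:~R) eqr_int; apply: sqr_sub3sqr_neq.
Qed.

Theorem proposition3p12 :
  (forall s : nat, (3 <= s)%N ->
     let n := (2 ^ s)%N in
     let pn : {poly int} := 'X + 2%:P in
     [/\ normO n pn = 2,
         totally_positive n pn &
         generates_prime_above_2 n (evk n 1 pn)])
  /\
  (forall s : nat, (2 <= s)%N ->
     let n := (3 * 2 ^ s)%N in
     let pn' : {poly int} := 'X + 1 in
     [/\ normO n pn' = -2,
         normO n (pn' - 2%:P) = -2,
         generates_prime_above_2 n (evk n 1 pn'),
         (forall q : {poly int}, unitO n q -> normO n q = 1) &
         (forall q : {poly int}, normO n q <> 2)]).
Proof.
split=> s s_ge.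
  rewrite -(subnK s_ge) addn3; split.
  - exact: normO_pow2_X2.
  - exact: totally_positive_pow2_X2.
  - exact: generates_prime_above_2_pow2.
rewrite -(subnK s_ge) addn2; split.
- exact: normO_3pow2_X1.
- exact: normO_3pow2_X1_sub2.
- exact: generates_prime_above_2_3pow2.
- exact: normO_3pow2_unit.
- exact: normO_3pow2_neq2.
Qed.
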